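(* Let $d\ge3$ and $h\ge1$. The Hall $(d-1)$-subgroup of the sandpile group $G(d,h)$ is cyclic of order $(d-1)^h$.
   Context: Let $\mathcal{T}(d,h)$ be the rooted tree in which the root $0$ has $d$ children, every vertex at distance $1,\dots,h-1$ from the root has $d-1$ children, and the vertices at distance $h$ are leaves. Let $V$ be its vertex set, $A$ its adjacency matrix, $\Delta := dI-A$, and $\Lambda\subset\mathbb{Z}^V$ the lattice spanned by the rows of $\Delta$. Then $G(d,h):=\mathbb{Z}^V/\Lambda$. For a finite group $G$, a subgroup $H$ is a Hall subgroup if $\gcd(|H|,|G:H|)=1$; it is a Hall $t$-subgroup if moreover $|H|$ and $t$ have the same set of prime divisors. A finite abelian group has a unique Hall $t$-subgroup for each $t$ dividing its order (here the Hall $(d-1)$-subgroup is the product of the Sylow $p$-subgroups for primes $p\mid d-1$). *)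

From mathcomp Require Import all_boot all_order all_algebra.
Set Implicit Arguments. Unset Strict Implicit. Unset Printing Implicit Defensive.
Import GRing.Theory Num.Theory.

(* ---------- The tree T(d,h) ----------
   A vertex is the path from the root, encoded as the sequence of child
   indices: the root is the empty sequence; the first entry is < d (the root
   has d children), later entries are < d-1 (other inner vertices have d-1
   children); the length (= depth) is at most h. *)
Definition raw_vertex (d h : nat) := {k : 'I_h.+1 & (nat_of_ord k).-tuple 'I_d}.

Definition rv_seq d h (x : raw_vertex d h) : seq nat :=
  map (@nat_of_ord d) (tval (tagged x)).

Definition is_vertex d h (x : raw_vertex d h) : bool :=
  all (fun i => (i < d.-1)%N) (behead (rv_seq x)).

Definition vertex d h := {x : raw_vertex d h | is_vertex x}.

Definition vseq d h (v : vertex d h) : seq nat := rv_seq (val v).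

Definition is_child d h (u v : vertex d h) : bool :=
  (size (vseq v) == (size (vseq u)).+1) && (take (size (vseq u)) (vseq v) == vseq u).

Definition adjacent d h (u v : vertex d h) : bool := is_child u v || is_child v u.

Definition Delta d h (u v : vertex d h) : int :=
  (d%:Z * (u == v : nat)%:Z - (adjacent u v : nat)%:Z)%R.

(* ---------- The sandpile group G(d,h) = Z^V / Lambda ----------
   Elements of Z^V are functions V -> int; Lambda is the Z-span of the
   rows of Delta.  Two elements x, y of Z^V represent the same element of
   G(d,h) iff x - y lies in Lambda. *)
Definition in_lattice d h (x : vertex d h -> int) : Prop :=
  exists c : vertex d h -> int,
    forall w, x w = (\sum_(v : vertex d h) c v * Delta v w)%R.

(* [x] lies in the Hall t-subgroup of the finite abelian group G(d,h)
   (product of the Sylow p-subgroups, p | t): t^k [x] = 0 for some k. *)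
Definition in_hall_subgroup d h (t : nat) (x : vertex d h -> int) : Prop :=
  exists k : nat, in_lattice (fun w => ((t ^ k)%N%:Z * x w)%R).

Definition has_order d h (g : vertex d h -> int) (n : nat) : Prop :=
  [/\ (0 < n)%N,
      in_lattice (fun w => (n%:Z * g w)%R) &
      forall m : nat, (0 < m < n)%N -> ~ in_lattice (fun w => (m%:Z * g w)%R)].

Definition hall_subgroup_generated_by d h (t : nat) (g : vertex d h -> int) : Prop :=
  forall x : vertex d h -> int,
    in_hall_subgroup t x <-> exists m : int, in_lattice (fun w => (x w - m * g w)%R).

(* Let q = d - 1 and give a vertex of depth j the weight
   W_j = 1 + q + ... + q^(h-j).  The weights restricted to the subtree of a
   non-root vertex v combine the rows of Delta into W_(j-1) e_v - W_j e_p,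
   where j is the depth of v and p its parent; over the whole tree they give
   d q^h e_root.  Hence the functional y |-> sum_x W_(depth x) y_x maps Lambda
   into q^h Z, and multiplying by d * prod_j W_j, which is prime to q, moves
   every class into the cyclic subgroup generated by g = d e_root.  As g has
   weight d W_0, prime to q, its order is exactly q^h and it generates the
   Hall (d-1)-subgroup. *)

From mathcomp Require Import all_boot all_order all_algebra.
From mathcomp Require Import zify ring.
Set Implicit Arguments. Unset Strict Implicit. Unset Printing Implicit Defensive.
Import GRing.Theory Num.Theory.

Lemma PoszX (m k : nat) : ((m ^ k)%N%:Z = m%:Z ^+ k)%R.
Proof. by rewrite -natz natrX natz. Qed.

Section Pairing.

Local Open Scope ring_scope.

Variable V : finType.

Definition pairing (c y : V -> int) : int := \sum_x c x * y x.

Lemma pairing_lin (c f g : V -> int) (a b : int) :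
  pairing c (fun w => a * f w + b * g w) = a * pairing c f + b * pairing c g.
Proof.
rewrite /pairing !big_distrr -big_split; apply: eq_bigr => x _.
by rewrite mulrDr mulrCA [c x * (b * _)]mulrCA.
Qed.

Lemma eq_pairing (c f g : V -> int) : f =1 g -> pairing c f = pairing c g.
Proof. by move=> e; apply: eq_bigr => x _; rewrite e. Qed.

End Pairing.

Section CyclicHallCriterion.

Local Open Scope ring_scope.

Variables (V : finType) (L : (V -> int) -> Prop).
Hypothesis L_ext : forall f g, L f -> f =1 g -> L g.
Hypothesis L_lin :
  forall (a b : int) f g, L f -> L g -> L (fun w => a * f w + b * g w).

Variables (q n : nat) (c g : V -> int) (P : int).
Hypothesis q_gt0 : (0 < q)%N.
Hypothesis L_pairing_dvd : forall y, L y -> (q%:Z ^+ n %| pairing c y)%Z.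
Hypothesis L_g : L (fun w => (q ^ n)%N%:Z * g w).
Hypothesis pairing_g_coprime : coprimez (pairing c g) q%:Z.
Hypothesis P_coprime : coprimez P q%:Z.
Hypothesis L_reduce :
  forall y : V -> int, exists A : int, L (fun w => P * y w - A * g w).

Lemma L_scale (a : int) f : L f -> L (fun w => a * f w).
Proof. by move=> Lf; apply: L_ext (L_lin a 0 Lf Lf) _ => w; ring. Qed.

Lemma L_coprime_cancel (a b : int) y :
  coprimez a b -> L (fun w => a * y w) -> L (fun w => b * y w) -> L y.
Proof.
case/coprimezP=> [[u v] /= Huv] La Lb.
apply: L_ext (L_lin u v La Lb) _ => w.
by rewrite !mulrA -mulrDl Huv mul1r.
Qed.

Lemma dvdz_of_dvd_mul_pairing (a : int) :
  (q%:Z ^+ n %| a * pairing c g)%Z -> (q%:Z ^+ n %| a)%Z.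
Proof. by rewrite Gauss_dvdzl // coprimezXl // coprimez_sym. Qed.

Lemma dvdz_of_L_mul_g (a : int) : L (fun w => a * g w) -> (q%:Z ^+ n %| a)%Z.
Proof.
move/L_pairing_dvd; rewrite (eq_pairing _ (g := fun w => a * g w + 0 * g w)).
  by rewrite pairing_lin mul0r addr0; apply: dvdz_of_dvd_mul_pairing.
by move=> w; rewrite mul0r addr0.
Qed.

Lemma L_mul_g_of_dvdz (a : int) : (q%:Z ^+ n %| a)%Z -> L (fun w => a * g w).
Proof.
case/dvdzP=> b ->; apply: L_ext (L_scale b L_g) _ => w.
by rewrite PoszX mulrA.
Qed.

(* Bezout gives m with [pairing c (x - m g)] divisible by [q ^ n]; then
   [L_reduce] puts a [P]-multiple of [y := x - m g] into [L], and so does the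
   q-power that kills [x], while [P] is prime to [q]. *)
Lemma cyclic_hall_criterion (x : V -> int) :
  (exists k, L (fun w => (q ^ k)%N%:Z * x w)) <->
  exists m : int, L (fun w => x w - m * g w).
Proof.
split; last first.
  case=> m Lm; exists n; apply: L_ext (L_lin (q ^ n)%N%:Z m Lm L_g) _ => w; ring.
case=> k Lx.
have [[a b] /= Hab] : exists uv : int * int,
    uv.1 * pairing c g + uv.2 * q%:Z ^+ n = 1.
  by apply/coprimezP; apply: coprimezXr.
exists (a * pairing c x); set y := fun w => x w - _ * g w.
have pairing_y : pairing c y = pairing c x * b * q%:Z ^+ n.
  rewrite (eq_pairing _ (g := fun w => 1 * x w + (- (a * pairing c x)) * g w));
    last by move=> w; rewrite /y; ring.
  by rewrite pairing_lin mul1r -{1}[pairing c x]mulr1 -Hab; ring.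
have [A LA] := L_reduce y.
have qA : (q%:Z ^+ n %| A)%Z.
  apply: dvdz_of_dvd_mul_pairing.
  have := L_pairing_dvd LA.
  rewrite (eq_pairing _ (g := fun w => P * y w + (- A) * g w)); last by move=> w; ring.
  rewrite pairing_lin pairing_y rpredDl ?mulNr ?rpredN //.
  by rewrite !dvdz_mull // dvdzz.
apply: (@L_coprime_cancel P (q%:Z ^+ (k + n))); first exact: coprimezXr.
  apply: L_ext (L_lin 1 1 LA (L_mul_g_of_dvdz qA)) _ => w; ring.
apply: L_ext (L_lin (q%:Z ^+ n) (- (q%:Z ^+ k * (a * pairing c x))) Lx L_g) _ => w.
by rewrite /y !PoszX exprD; ring.
Qed.

Lemma generator_order :
  [/\ (0 < q ^ n)%N, L (fun w => (q ^ n)%N%:Z * g w) &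
      forall m : nat, (0 < m < q ^ n)%N -> ~ L (fun w => m%:Z * g w)].
Proof.
split=> //; first by rewrite expn_gt0 q_gt0.
move=> m /andP[m_gt0 m_lt] /dvdz_of_L_mul_g.
by rewrite -PoszX dvdzE /= => /(dvdn_leq m_gt0); rewrite leqNgt m_lt.
Qed.

End CyclicHallCriterion.

Section TreeCombinatorics.

Variables d h : nat.
Local Notation V := (vertex d h).

Definition depth (x : V) := size (vseq x).

Lemma depth_le (x : V) : depth x <= h.
Proof.
by case: x => [[k t] Hx]; rewrite /depth /vseq /rv_seq /= size_map size_tuple -ltnS.
Qed.

Lemma vseq_inj : injective (@vseq d h).
Proof.
move=> [[k t] Hu] [[k' t'] Hv]; rewrite /vseq /rv_seq /= => e.
have ek : k = k'.
  by apply/val_inj; move: (congr1 size e); rewrite !size_map !size_tuple.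
subst k'; have et : t = t' by apply/val_inj/(inj_map val_inj).
by subst t'; apply: val_inj.
Qed.

Lemma vseq_lt (x : V) : all (fun i => i < d) (vseq x).
Proof. by case: x => [[k t] Hx]; apply/allP => i /mapP [j _ ->]. Qed.

Lemma behead_vseq_lt (x : V) : all (fun i => i < d.-1) (behead (vseq x)).
Proof. by case: x. Qed.

Definition vtuple (x : V) : seq 'I_d := tval (tagged (val x)).

Lemma vseqE (x : V) : vseq x = map val (vtuple x). Proof. by []. Qed.

Definition raw_of_seq (s : seq 'I_d) (Hs : size s < h.+1) : raw_vertex d h :=
  existT (fun k : 'I_h.+1 => k.-tuple 'I_d) (Ordinal Hs) (in_tuple s).

Definition root : V := exist _ (@raw_of_seq [::] (ltn0Sn h)) isT.

Lemma depth_root : depth root = 0. Proof. by []. Qed.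

Lemma depth0_root (x : V) : depth x = 0 -> x = root.
Proof. by move=> /size0nil e; apply: vseq_inj; rewrite e. Qed.

Lemma is_child_depth (u v : V) : is_child u v -> depth v = (depth u).+1.
Proof. by case/andP => /eqP. Qed.

Lemma is_child_asym (u v : V) : is_child u v -> ~~ is_child v u.
Proof. by move=> /is_child_depth e; apply/negP => /is_child_depth; rewrite e; lia. Qed.

Lemma is_child_root (u : V) : is_child u root = false.
Proof. by apply/negP => /is_child_depth. Qed.

Lemma parent_uniq (p p' x : V) : is_child p x -> is_child p' x -> p = p'.
Proof.
case/andP=> /eqP e1 /eqP a1; case/andP=> /eqP e2 /eqP a2.
by apply: vseq_inj; rewrite -a1 -a2; congr take; apply/succn_inj; rewrite -e1 -e2.
Qed.

Lemma parent_exists (x : V) : 0 < depth x -> exists p, is_child p x.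
Proof.
move=> dx; have Hs : size (take (depth x).-1 (vtuple x)) < h.+1.
  rewrite size_take -(size_map val) -vseqE; have := depth_le x.
  by rewrite /depth; case: ifP; lia.
have Hp : is_vertex (raw_of_seq Hs).
  have := behead_vseq_lt x; rewrite /is_vertex /rv_seq /= map_take -vseqE.
  case: (vseq x) => //= y s; case: (depth x).-1 => //= n.
  by rewrite -{1}(cat_take_drop n s) all_cat => /andP[].
exists (exist (@is_vertex d h) _ Hp).
rewrite /is_child /vseq /rv_seq /= -!vseqE map_take size_take.
have -> : (depth x).-1 < size (vseq x) by move: dx; rewrite /depth; lia.
by rewrite eqxx andbT; apply/eqP; move: dx; rewrite /depth; lia.
Qed.

Definition nchildren (x : V) := if depth x == 0 then d else d.-1.

Lemma nchildren_le (x : V) : nchildren x <= d.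
Proof. by rewrite /nchildren; case: ifP => // _; apply: leq_pred. Qed.

Lemma nchildren_lt (x : V) n : n < nchildren x -> (depth x == 0) || (n < d.-1).
Proof. by rewrite /nchildren; case: ifP => //= _ ->; rewrite orbT. Qed.

Section Children.

Variables (x : V) (x_inner : depth x < h).

Lemma rcons_size (i : 'I_d) : size (rcons (vtuple x) i) < h.+1.
Proof. by rewrite size_rcons ltnS; move: x_inner; rewrite /depth vseqE size_map. Qed.

Lemma child_is_vertex (j : 'I_(nchildren x)) :
  is_vertex (raw_of_seq (rcons_size (widen_ord (nchildren_le x) j))).
Proof.
rewrite /is_vertex /rv_seq /= map_rcons -vseqE.
have := nchildren_lt (ltn_ord j); rewrite /depth size_eq0.
by move: (behead_vseq_lt x); case: (vseq x) => //= y s Hs j_lt; rewrite all_rcons j_lt.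
Qed.

Definition child (j : 'I_(nchildren x)) : V := exist (@is_vertex d h) _ (child_is_vertex j).

Lemma vseq_child j : vseq (child j) = rcons (vseq x) j.
Proof. by rewrite /vseq /rv_seq /= map_rcons. Qed.

Lemma is_child_child j : is_child x (child j).
Proof. by rewrite /is_child vseq_child size_rcons eqxx /= -cats1 take_size_cat. Qed.

Lemma child_inj : injective child.
Proof.
by move=> j k /(congr1 (@vseq d h)); rewrite !vseq_child => /rcons_inj [] /val_inj.
Qed.

Lemma card_children : #|[pred u | is_child x u]| = nchildren x.
Proof.
rewrite -[RHS]card_ord -(card_imset _ child_inj); apply: eq_card => u.
rewrite inE /=; apply/idP/imsetP => [xu|[j _ ->]]; last exact: is_child_child.
case/andP: (xu) => /eqP du /eqP tu; set i := nth 0 (vseq u) (depth x).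
have i_lt : i < nchildren x.
  rewrite /nchildren; case: ifP => [_|/negbT dx].
    by apply: (allP (vseq_lt u)); apply: mem_nth; rewrite du.
  apply: (allP (behead_vseq_lt u)).
  rewrite /i -(prednK (n := depth x)) ?lt0n // -nth_behead; apply: mem_nth.
  by rewrite size_behead du /depth; move: dx; rewrite /depth; lia.
exists (Ordinal i_lt) => //; apply: vseq_inj; rewrite vseq_child /=.
rewrite -(take_oversize (n := (depth x).+1) (s := vseq u)); last by rewrite du.
by rewrite (take_nth 0); [rewrite tu | rewrite du /depth].
Qed.

End Children.

Definition in_subtree (v x : V) := take (depth v) (vseq x) == vseq v.

Lemma in_subtree_depth v x : in_subtree v x -> depth v <= depth x.
Proof.
move/eqP/(congr1 size); rewrite size_take /depth.
by case: ltnP => [/ltnW // | _ <-].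
Qed.

Lemma in_subtree_refl v : in_subtree v v.
Proof. by rewrite /in_subtree take_size. Qed.

Lemma in_subtree_root x : in_subtree root x.
Proof. by rewrite /in_subtree depth_root take0. Qed.

Lemma in_subtree_child v x u : is_child x u -> in_subtree v x -> in_subtree v u.
Proof.
case/andP=> _ /eqP tu vx; have := in_subtree_depth vx.
by move: vx; rewrite /in_subtree -tu => /[swap] /take_takel ->.
Qed.

Lemma in_subtree_parent v p x :
  is_child p x -> in_subtree v x -> x != v -> in_subtree v p.
Proof.
case/andP=> /eqP dx /eqP tx vx xv; have := in_subtree_depth vx.
rewrite leq_eqVlt => /predU1P [dvx | dv_lt].
  by case/eqP: xv; apply: vseq_inj; move/eqP: vx; rewrite dvx take_size.
by rewrite /in_subtree -tx take_takel // -ltnS -dx.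
Qed.

Lemma parent_notin_subtree p v : is_child p v -> ~~ in_subtree v p.
Proof. by move=> /is_child_depth dv; apply/negP => /in_subtree_depth; rewrite dv ltnn. Qed.

Lemma subtree_entry v x u :
  is_child x u -> in_subtree v u -> ~~ in_subtree v x -> u = v.
Proof.
move=> xu vu vx; apply/eqP; apply: contraNT vx => uv.
exact: in_subtree_parent xu vu uv.
Qed.

End TreeCombinatorics.

Section TreeWeights.

Local Open Scope ring_scope.

Variables d h : nat.
Hypothesis d_gt0 : (0 < d)%N.
Local Notation V := (vertex d h).
Local Notation q := (d.-1)%:Z.

Lemma Delta_sym (u v : V) : Delta u v = Delta v u.
Proof. by rewrite /Delta eq_sym /adjacent orbC. Qed.

Lemma sum_mulDelta (F : V -> int) x :
  \sum_u F u * Delta u x =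
  d%:Z * F x - \sum_(u | is_child u x) F u - \sum_(u | is_child x u) F u.
Proof.
under eq_bigr => u _ do rewrite /Delta mulrBr.
rewrite sumrB (bigD1 x) //= eqxx big1 ?addr0 => [|u /negbTE->]; last by rewrite !mulr0.
have adjE u : F u * (adjacent u x : nat)%:Z =
    (if is_child u x then F u else 0) + (if is_child x u then F u else 0).
  rewrite /adjacent; case ux: (is_child u x); case xu: (is_child x u) => /=.
  - by move: (is_child_asym ux); rewrite xu.
  - by rewrite mulr1 addr0.
  - by rewrite mulr1 add0r.
  - by rewrite mulr0 addr0.
by under eq_bigr => u _ do rewrite adjE; rewrite big_split /= -!big_mkcond /=; ring.
Qed.

Lemma sum_parent (F : V -> int) p x : is_child p x -> \sum_(u | is_child u x) F u = F p.
Proof.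
by move=> px; apply: big_pred1 => u /=; apply/idP/eqP => [/parent_uniq/(_ px) | ->].
Qed.

Lemma sum_parent_root (F : V -> int) : \sum_(u | is_child u (root d h)) F u = 0.
Proof. by apply: big_pred0 => u; rewrite is_child_root. Qed.

Definition geom (n : nat) : int := \sum_(i < n) q ^+ i.

Lemma geomS n : geom n.+1 = 1 + q * geom n.
Proof.
rewrite /geom big_ord_recl expr0 big_distrr /=.
by congr (_ + _); apply: eq_bigr => i _; rewrite exprS.
Qed.

Lemma geomSr n : geom n.+1 = geom n + q ^+ n.
Proof. by rewrite /geom big_ord_recr. Qed.

(* [weight j = 1 + q + ... + q ^ (h - j)] for [j <= h]; for [j > h] the
   truncated subtraction makes it [0], which handles the leaves uniformly. *)
Definition weight (j : nat) : int := geom (h.+1 - j).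

Lemma natz_pred : d%:Z = q + 1.
Proof. by rewrite -(prednK d_gt0) /= -addn1 PoszD. Qed.

Lemma weight_rec j : (0 < j <= h)%N -> d%:Z * weight j - weight j.+1 * q = weight j.-1.
Proof.
move=> /andP[j_gt0 j_le]; rewrite /weight.
have -> : (h.+1 - j = (h - j).+1)%N by lia.
have -> : (h.+1 - j.-1 = (h - j).+2)%N by lia.
by rewrite subSS !geomS natz_pred; ring.
Qed.

Lemma weight_rec0 : d%:Z * weight 0 - weight 1 * d%:Z = d%:Z * q ^+ h.
Proof. by rewrite /weight subn0 subSS subn0 geomSr; ring. Qed.

Lemma weight_out j : (h < j)%N -> weight j = 0.
Proof.
by move=> hj; rewrite /weight (eqP (_ : h.+1 - j == 0)%N) ?subn_eq0 // /geom big_ord0.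
Qed.

Lemma weight_coprime j : (j <= h)%N -> coprimez (weight j) q.
Proof.
move=> jh; apply/coprimezP; rewrite /weight.
have -> : (h.+1 - j = (h - j).+1)%N by lia.
by exists (1, - geom (h - j)) => /=; rewrite geomS; ring.
Qed.

Lemma d_coprime : coprimez d%:Z q.
Proof. by apply/coprimezP; exists (1, -1) => /=; rewrite natz_pred; ring. Qed.

Definition indicator (v w : V) : int := if w == v then 1 else 0.

Definition depth_weight (x : V) : int := weight (depth x).

Definition subtree_weight (v u : V) : int :=
  if in_subtree v u then depth_weight u else 0.

Lemma sum_children_weight (x : V) :
  \sum_(u | is_child x u) weight (depth x).+1 = weight (depth x).+1 * (nchildren x)%:Z.
Proof.
have [x_inner | x_leaf] := ltnP (depth x) h.
  by rewrite sumr_const (card_children x_inner) pmulrn mulrzz.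
by rewrite weight_out ?mul0r ?big1 //; have := depth_le x; lia.
Qed.

Lemma subtree_weight_mulDelta_in (v x : V) : in_subtree v x ->
  \sum_u subtree_weight v u * Delta u x =
  if x == v then (if depth v == 0%N then d%:Z * q ^+ h else weight (depth v).-1) else 0.
Proof.
move=> vx; rewrite sum_mulDelta {1}/subtree_weight vx.
have -> : \sum_(u | is_child x u) subtree_weight v u =
           weight (depth x).+1 * (nchildren x)%:Z.
  rewrite -sum_children_weight; apply: eq_bigr => u xu.
  by rewrite /subtree_weight (in_subtree_child xu vx) /depth_weight (is_child_depth xu).
have [dx0 | dx_gt0] := posnP (depth x).
  have xr := depth0_root dx0; have dv0 : depth v = 0%N.
    by apply/eqP; rewrite -leqn0 -dx0 in_subtree_depth.
  rewrite xr (depth0_root dv0) sum_parent_root eqxx /nchildren /depth_weight depth_root /=.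
  by rewrite -weight_rec0; ring.
have [p px] := parent_exists dx_gt0; rewrite (sum_parent _ px).
have dx := is_child_depth px; have := depth_le x.
rewrite /nchildren /depth_weight dx /= => dp_lt.
have rec := weight_rec (j := (depth p).+1) dp_lt.
case: eqP => [xv | /eqP xv].
  subst x; rewrite /subtree_weight (negbTE (parent_notin_subtree px)) dx /=.
  by rewrite /depth_weight -rec; ring.
by rewrite /subtree_weight (in_subtree_parent px vx xv) /depth_weight -rec; ring.
Qed.

Lemma subtree_weight_mulDelta_out (v x : V) : ~~ in_subtree v x ->
  \sum_u subtree_weight v u * Delta u x = - (if is_child x v then weight (depth v) else 0).
Proof.
move=> vx; rewrite sum_mulDelta {1}/subtree_weight (negbTE vx) mulr0 sub0r.
have -> : \sum_(u | is_child u x) subtree_weight v u = 0.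
  have [/depth0_root -> | /parent_exists [p px]] := posnP (depth x).
    exact: sum_parent_root.
  rewrite (sum_parent _ px) /subtree_weight.
  by case: ifP => // /(in_subtree_child px); rewrite (negbTE vx).
rewrite oppr0 sub0r; congr (- _).
rewrite (eq_bigr (fun u => if u == v then weight (depth v) else 0)); last first.
  move=> u xu; rewrite /subtree_weight; case: ifP => [vu | /negbT vu].
    by rewrite (subtree_entry xu vu vx) eqxx.
  by case: eqP vu => // ->; rewrite in_subtree_refl.
rewrite -big_mkcondr /=; case: ifP => xv.
  by rewrite (big_pred1 v) // => u /=; case: eqP => [->|]; rewrite ?xv ?andbF.
by apply: big_pred0 => u; case: eqP => [->|]; rewrite ?xv ?andbF.
Qed.

Lemma weight_mulDelta (x : V) :
  \sum_u depth_weight u * Delta u x = if x == root d h then d%:Z * q ^+ h else 0.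
Proof.
transitivity (\sum_u subtree_weight (root d h) u * Delta u x).
  by apply: eq_bigr => u _; rewrite /subtree_weight in_subtree_root.
by rewrite subtree_weight_mulDelta_in ?in_subtree_root // depth_root.
Qed.

Lemma subtree_weight_mulDelta_child (p v x : V) : is_child p v ->
  \sum_u subtree_weight v u * Delta u x =
  weight (depth p) * indicator v x - weight (depth v) * indicator p x.
Proof.
move=> pv; have dv := is_child_depth pv; rewrite /indicator.
case vx: (in_subtree v x).
  rewrite subtree_weight_mulDelta_in // dv /=.
  have -> : (x == p) = false.
    by apply: contraTF vx => /eqP ->; apply: parent_notin_subtree.
  by case: (x == v); ring.
rewrite subtree_weight_mulDelta_out ?vx //.
have -> : (x == v) = false by apply: contraFF vx => /eqP ->; apply: in_subtree_refl.
have -> : is_child x v = (x == p) by apply/idP/eqP => [/parent_uniq/(_ pv) | ->].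
by case: (x == p); ring.
Qed.

Lemma in_lattice_ext (f g : V -> int) : in_lattice f -> f =1 g -> in_lattice g.
Proof. by case=> c Hc e; exists c => w; rewrite -e Hc. Qed.

Lemma in_lattice_lin (a b : int) (f g : V -> int) :
  in_lattice f -> in_lattice g -> in_lattice (fun w => a * f w + b * g w).
Proof.
case=> c Hc [c' Hc']; exists (fun v => a * c v + b * c' v) => w.
rewrite Hc Hc' !big_distrr -big_split; apply: eq_bigr => v _ /=.
by rewrite mulrDl !mulrA.
Qed.

Lemma in_lattice_scale (a : int) (f : V -> int) :
  in_lattice f -> in_lattice (fun w => a * f w).
Proof.
by move=> Lf; apply: in_lattice_ext (in_lattice_lin a 0 Lf Lf) _ => w; rewrite mul0r addr0.
Qed.

Lemma in_lattice0 : in_lattice (fun _ : V => 0).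
Proof. by exists (fun _ => 0) => w; rewrite big1 // => v _; rewrite mul0r. Qed.

Lemma in_lattice_sum (F : V -> V -> int) :
  (forall v, in_lattice (F v)) -> in_lattice (fun w => \sum_v F v w).
Proof.
move=> LF; have [c Hc] := fin_all_exists LF.
exists (fun u => \sum_v c v u) => w.
rewrite (eq_bigr _ (fun v _ => Hc v w)) exchange_big.
by apply: eq_bigr => u _; rewrite mulr_suml.
Qed.

Lemma in_lattice_step (p v : V) : is_child p v ->
  in_lattice (fun w => weight (depth p) * indicator v w - weight (depth v) * indicator p w).
Proof.
by move=> pv; exists (subtree_weight v) => w; rewrite (subtree_weight_mulDelta_child _ pv).
Qed.

Definition generator (w : V) : int := d%:Z * indicator (root d h) w.

Lemma in_lattice_generator : in_lattice (fun w => (d.-1 ^ h)%N%:Z * generator w).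
Proof.
exists depth_weight => w; rewrite weight_mulDelta /generator /indicator PoszX.
by case: (w == root d h); ring.
Qed.

Lemma pairing_depth_weight_dvd (y : V -> int) :
  in_lattice y -> (q ^+ h %| pairing depth_weight y)%Z.
Proof.
case=> c Hc.
have row u : \sum_x depth_weight x * Delta u x = if u == root d h then d%:Z * q ^+ h else 0.
  by rewrite -weight_mulDelta; apply: eq_bigr => x _; rewrite Delta_sym.
have -> : pairing depth_weight y = \sum_u c u * \sum_x depth_weight x * Delta u x.
  rewrite /pairing; under eq_bigr => x _ do rewrite Hc big_distrr.
  rewrite exchange_big; apply: eq_bigr => u _; rewrite big_distrr.
  by apply: eq_bigr => x _ /=; rewrite mulrCA.
under eq_bigr => u _ do rewrite row.
rewrite (bigD1 (root d h)) //= eqxx big1 ?addr0 => [|u /negbTE->]; last by rewrite mulr0.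
by rewrite !dvdz_mull.
Qed.

Lemma pairing_generator_coprime : coprimez (pairing depth_weight generator) q.
Proof.
have -> : pairing depth_weight generator = d%:Z * weight 0.
  rewrite /pairing (bigD1 (root d h)) //= big1 => [|u /negbTE ur].
    by rewrite /generator /indicator eqxx /depth_weight depth_root mulr1 addr0 mulrC.
  by rewrite /generator /indicator ur !mulr0.
by rewrite coprimezMl d_coprime weight_coprime.
Qed.

Definition weight_prod (j : nat) : int := \prod_(0 <= i < j) weight i.

Lemma weight_prod_coprime : coprimez (weight_prod h.+1) q.
Proof.
rewrite /weight_prod big_nat.
apply: (big_ind (fun x => coprimez x q)) => [|a b|i /andP[_ i_le]].
- by rewrite coprimezE coprime1n.
- by rewrite coprimezMl => -> ->.
- exact: weight_coprime.
Qed.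

Lemma indicator_reduce_depth j (v : V) : depth v = j ->
  exists a,
    in_lattice (fun w => weight_prod j * indicator v w - a * indicator (root d h) w).
Proof.
elim: j v => [|j IH] v dv.
  exists 1; rewrite (depth0_root dv); apply: in_lattice_ext in_lattice0 _ => w.
  by rewrite /weight_prod big_geq // mul1r subrr.
have [p pv] : exists p, is_child p v by apply: parent_exists; rewrite dv.
have dp : depth p = j by apply: succn_inj; rewrite -dv (is_child_depth pv).
have [a Ha] := IH p dp; exists (weight j.+1 * a).
have step := in_lattice_lin (weight_prod j) (weight j.+1) (in_lattice_step pv) Ha.
by apply: in_lattice_ext step _ => w; rewrite dp dv /weight_prod big_nat_recr //=; ring.
Qed.

Lemma indicator_reduce (v : V) :
  exists a,
    in_lattice (fun w => weight_prod h.+1 * indicator v w - a * indicator (root d h) w).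
Proof.
have [a Ha] := indicator_reduce_depth (erefl (depth v)).
pose K := \prod_(depth v <= i < h.+1) weight i.
have -> : weight_prod h.+1 = weight_prod (depth v) * K.
  by rewrite /weight_prod -big_cat_nat //; have := depth_le v; lia.
by exists (K * a); apply: in_lattice_ext (in_lattice_scale K Ha) _ => w; ring.
Qed.

Lemma lattice_reduce (y : V -> int) :
  exists A, in_lattice (fun w => d%:Z * weight_prod h.+1 * y w - A * generator w).
Proof.
have [a Ha] := fin_all_exists indicator_reduce.
exists (\sum_v y v * a v).
have sum_Ha := in_lattice_sum (fun v => in_lattice_scale (y v) (Ha v)).
apply: in_lattice_ext (in_lattice_scale d%:Z sum_Ha) _.
move=> w; rewrite /generator mulr_suml.
have -> : y w = \sum_v y v * indicator v w.
  rewrite (bigD1 w) //= big1 => [|v /negbTE vw]; last by rewrite /indicator eq_sym vw mulr0.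
  by rewrite /indicator eqxx mulr1 addr0.
rewrite !mulr_sumr -sumrB; apply: eq_bigr => v _; ring.
Qed.

End TreeWeights.

Theorem theorem2p8 (d h : nat) :
  (3 <= d)%N -> (1 <= h)%N ->
  exists g : vertex d h -> int,
    hall_subgroup_generated_by (d - 1) g /\ has_order g ((d - 1) ^ h).
Proof.
move=> d_ge3 _; have d_gt0 : 0 < d by lia.
have pairing_dvd := @pairing_depth_weight_dvd d h d_gt0.
have gen_order := in_lattice_generator h d_gt0.
have gen_coprime := @pairing_generator_coprime d h d_gt0.
exists (@generator d h); rewrite subn1; split.
- move=> x; apply: (cyclic_hall_criterion (@in_lattice_ext d h) (@in_lattice_lin d h)
    pairing_dvd gen_order gen_coprime _ (lattice_reduce d_gt0)).
  by rewrite coprimezMl d_coprime ?weight_prod_coprime.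
- by apply: generator_order pairing_dvd gen_order gen_coprime; lia.
Qed.
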